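(* Let $G=(V,E)$ be a connected finite simple graph that is bijective, i.e. $G$ has exactly one cycle and this cycle has odd length; let $A$ be its incidence matrix and $\lambda\in\mathbb{R}_{>0}^n$, and let $\mu$ be the unique solution of $A\mu=\lambda$ (which is the vector of matching rates of the problem $(G,\lambda)$ under any stabilizing policy). Let $k\in E$. (i) If edge $k$ does not belong to the cycle of $G$, then removing $k$ separates $G$ into a tree and a unicyclic graph; letting $V_k\subseteq V$ be the node set of the tree part (which contains one endpoint of $k$), we have $\mu_k=\sum_{i\in V_k}(-1)^{d_{i,k}}\lambda_i$. (ii) If edge $k$ belongs to the cycle of $G$, then $\mu_k=\frac12\sum_{i\in V}(-1)^{d_{i,k}}\lambda_i$. Here $d_{i,k}$ denotes the minimum of the graph distances from node $i$ to the two endpoints of edge $k$.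
   Context: The incidence matrix $A$ of $G$ (with $V=\{1,\dots,n\}$, $E=\{e_1,\dots,e_m\}$) is the $n\times m$ matrix with $a_{i,k}=1$ if node $i$ is an endpoint of $e_k$ and $0$ otherwise; for a bijective graph $m=n$ and $A$ is invertible. The equation $A\mu=\lambda$ reads $\sum_{k\in E_i}\mu_k=\lambda_i$ for every node $i$, where $E_i$ is the set of edges incident to $i$. *)

From HB Require Import structures.
From mathcomp Require Import all_boot all_order all_algebra.
Set Implicit Arguments. Unset Strict Implicit. Unset Printing Implicit Defensive.
Import Order.TTheory GRing.Theory Num.Theory.

(* A finite simple graph on the vertex type T is given by a symmetric,
   irreflexive adjacency relation g : rel T.  Edges are 2-element vertex sets. *)

Definition simple_graph (T : finType) (g : rel T) : Prop :=
  symmetric g /\ irreflexive g.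

Definition connected_graph (T : finType) (g : rel T) : Prop :=
  forall x y : T, connect g x y.

Definition edges (T : finType) (g : rel T) : {set {set T}} :=
  [set k : {set T} | [exists x : T, exists y : T, g x y && (k == [set x; y])]].

Definition cycle_edges (T : finType) (p : seq T) : {set {set T}} :=
  [set [set xy.1; xy.2] | xy in zip p (rot 1 p)].

Definition is_cycle (T : finType) (g : rel T) (C : {set {set T}}) : Prop :=
  exists p : seq T, [/\ 3 <= size p, uniq p, cycle g p & C = cycle_edges p].

Definition bijective_graph (T : finType) (g : rel T) : Prop :=
  [/\ connected_graph g,
      exists C, is_cycle g C /\ (forall C', is_cycle g C' -> C' = C)
    & forall C, is_cycle g C -> odd #|C| ].

Definition walk_len (T : finType) (g : rel T) (n : nat) (x y : T) : bool :=
  [exists p : n.-tuple T, path g x p && (last x p == y)].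

(* graph distance: least n with a walk of length n (shortest paths in a
   connected graph have length < #|T|) *)
Definition dist (T : finType) (g : rel T) (x y : T) : nat :=
  find (fun n => walk_len g n x y) (iota 0 #|T|).

Definition dedge (T : finType) (g : rel T) (i u v : T) : nat :=
  minn (dist g i u) (dist g i v).

Definition remove_edge (T : finType) (g : rel T) (k : {set T}) : rel T :=
  fun x y => g x y && ([set x; y] != k).

Definition incidence_eq (R : nzRingType) (T : finType) (g : rel T)
    (mu : {set T} -> R) (lam : T -> R) : Prop :=
  forall i : T, (\sum_(k in edges g | i \in k) mu k)%R = lam i.

From mathcomp Require Import all_boot all_order all_algebra zify.
Import GRing.Theory Num.Theory.
Set Implicit Arguments. Unset Strict Implicit. Unset Printing Implicit Defensive.

(* Weight each vertex i by s_i = (-1)^(d_{i,k}), where k = {u, v}.  Summing the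
   equations of A mu = lambda with these weights gives
     sum_i s_i lambda_i = sum_{e = {a, b} in E} mu_e (s_a + s_b),
   and since d changes by at most one along an edge, the term of e vanishes
   unless d_a = d_b.  For e = k the bracket is 2.  For any other such level edge,
   follow strictly d-decreasing paths from a and from b down to k: either they
   reach the same endpoint of k, and then e lies on a cycle of G - k, or they
   reach different endpoints and close, through k, a cycle of even length
   2 (d_a + 1).  A bijective graph has no even cycle, and when k is on its
   cycle G - k has none at all; this gives (ii).  For (i) the same computation
   is restricted to V_k: no edge other than k leaves V_k, a level edge inside
   V_k would put a cycle inside the tree part, and only the endpoint of k lying
   in V_k contributes. *)

Section Distance.

Variables (T : finType) (g : rel T).

Lemma walk_lenP n x y :
  reflect (exists p : seq T, [/\ size p = n, path g x p & last x p = y])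
          (walk_len g n x y).
Proof.
apply: (iffP existsP) => [[t /andP[pt /eqP lt]]|[p [sp pp lp]]].
  by exists t; rewrite size_tuple.
have sp' : size p == n by rewrite sp.
by exists (Tuple sp'); rewrite /= pp lp eqxx.
Qed.

Lemma walk_len0 x y : walk_len g 0 x y = (x == y).
Proof.
apply/walk_lenP/eqP => [[p [sp _ <-]]|<-]; last by exists [::].
by case: p sp.
Qed.

Lemma walk_lenSP n x z :
  reflect (exists2 y, g x y & walk_len g n y z) (walk_len g n.+1 x z).
Proof.
apply: (iffP (walk_lenP n.+1 x z)) => [[[|y p] [//= [sp] /andP[gxy pp] lp]]|[y gxy]].
  by exists y => //; apply/walk_lenP; exists p.
by move=> /walk_lenP[p [sp pp lp]]; exists (y :: p); rewrite /= sp gxy pp lp.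
Qed.

Lemma connect_walk_len x y :
  connect g x y -> exists2 n, n < #|T| & walk_len g n x y.
Proof.
move=> /connectP[p pp ->]; have [p' pp' up' _] := shortenP pp.
exists (size p'); last by apply/walk_lenP; exists p'.
by have /= <- := card_uniqP up'; apply: max_card.
Qed.

Lemma dist_walk_len x y : connect g x y -> walk_len g (dist g x y) x y.
Proof.
move=> /connect_walk_len[n nT wn].
have has_walk : has (fun n => walk_len g n x y) (iota 0 #|T|).
  by apply/hasP; exists n; rewrite ?mem_iota.
have := nth_find 0 has_walk.
by rewrite nth_iota // -[X in _ < X](size_iota 0 #|T|) -has_find.
Qed.

Lemma dist_min n x y : walk_len g n x y -> dist g x y <= n.
Proof.
move=> wn; rewrite leqNgt; apply/negP => lt_n.
have n_lt : n < #|T|.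
  by apply: leq_trans lt_n _; rewrite -[X in _ <= X](size_iota 0) find_size.
by have := before_find 0 lt_n; rewrite nth_iota // wn.
Qed.

Lemma dist_self x : dist g x x = 0.
Proof. by apply/eqP; rewrite -leqn0 dist_min ?walk_len0. Qed.

Hypothesis g_connected : connected_graph g.

Lemma dist_eq0 x y : dist g x y = 0 -> x = y.
Proof.
by move=> d0; have := dist_walk_len (g_connected x y); rewrite d0 walk_len0 => /eqP.
Qed.

Lemma dist_edge x y z : g x y -> dist g x z <= (dist g y z).+1.
Proof. by move=> gxy; apply/dist_min/walk_lenSP; exists y; rewrite ?dist_walk_len. Qed.

Lemma dist_descent x z n :
  dist g x z = n.+1 -> exists2 y, g x y & dist g y z = n.
Proof.
move=> dx; have := dist_walk_len (g_connected x z).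
rewrite dx => /walk_lenSP[y gxy wy]; exists y => //.
by apply/eqP; rewrite eqn_leq dist_min //= -ltnS -dx dist_edge.
Qed.

Variables u v : T.

Lemma dedge_eq0 x : (dedge g x u v == 0) = (x \in [set u; v]).
Proof.
rewrite /dedge !inE; apply/eqP/orP => [|[]/eqP->]; rewrite ?dist_self ?min0n ?minn0 //.
by rewrite /minn; case: ifP => _ /dist_eq0 ->; rewrite eqxx; [left|right].
Qed.

Lemma dedge_edge x y : g x y -> dedge g x u v <= (dedge g y u v).+1.
Proof. by move=> gxy; rewrite /dedge -minnSS leq_min !geq_min !dist_edge ?orbT. Qed.

Lemma dedge_descent x :
  0 < dedge g x u v -> exists2 y, g x y & dedge g y u v = (dedge g x u v).-1.
Proof.
case dx: (dedge g x u v) => [//|n] _.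
have [y gxy dy] : exists2 y, g x y & dedge g y u v <= n.
  move: dx; rewrite /dedge /minn; case: ifP => _ /dist_descent[y gxy dy];
    by exists y; rewrite // geq_min dy leqnn ?orbT.
by exists y => //; apply/eqP; rewrite eqn_leq dy -ltnS -dx dedge_edge.
Qed.

End Distance.

Section Descent.

Variables (T : finType) (g : rel T) (d : T -> nat).

Hypothesis d_descent :
  forall x, 0 < d x -> exists2 y, g x y & d y = (d x).-1.

Definition descent_step x : T :=
  odflt x [pick y | g x y && (d y == (d x).-1)].

Local Notation f := descent_step.

Lemma descent_stepP x : 0 < d x -> g x (f x) /\ d (f x) = (d x).-1.
Proof.
move=> dx; rewrite /f; case: pickP => [y /andP[gxy /eqP dy] //|none].
by have [y gxy dy] := d_descent dx; have := none y; rewrite gxy dy eqxx.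
Qed.

Lemma d_iter_descent i x : i <= d x -> d (iter i f x) = d x - i.
Proof.
elim: i => [|i IH] le_i; first by rewrite subn0.
have le_i' := ltnW le_i.
have dfi : 0 < d (iter i f x) by rewrite IH // subn_gt0.
by rewrite iterS (descent_stepP dfi).2 IH // subnS.
Qed.

Lemma d_descent_end x : d (iter (d x) f x) = 0.
Proof. by rewrite d_iter_descent ?subnn. Qed.

Lemma descent_path (h : rel T) x :
  (forall y, 0 < d y -> h y (f y)) -> path h x (traject f (f x) (d x)).
Proof.
move=> hf; move Dn: (d x) => n; elim: n x Dn => [//|n IH] x dx.
rewrite trajectS /= hf ?dx //; apply: IH.
by rewrite (descent_stepP _).2 dx.
Qed.

Lemma connect_descent_end (h : rel T) x :
  (forall y, 0 < d y -> h y (f y)) -> connect h x (iter (d x) f x).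
Proof.
by move=> hf; apply/connectP; exists (traject f (f x) (d x));
  rewrite ?descent_path ?last_traject.
Qed.

Lemma uniq_descent x : uniq (traject f x (d x).+1).
Proof.
rewrite looping_uniq; apply/trajectP => -[i lt_i /(congr1 d)].
by rewrite d_descent_end d_iter_descent ?(ltnW lt_i) //; lia.
Qed.

End Descent.

Lemma map_next_rot1 (T : eqType) (p : seq T) : uniq p -> map (next p) p = rot 1 p.
Proof.
case: p => [//|x q] up; rewrite rot1_cons.
apply: (@eq_from_nth _ x); rewrite ?size_map ?size_rcons // => i lt_i.
rewrite (nth_map x) // next_nth mem_nth // index_uniq // nth_rcons if_same.
by case: ltnP => // le_qi; rewrite nth_default.
Qed.

Lemma next_next_neq (T : eqType) (p : seq T) x :
  uniq p -> 3 <= size p -> x \in p -> next p (next p x) != x.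
Proof.
move=> up p3 /rot_to[i q Dp]; rewrite -!(next_rot i up) Dp.
have := up; rewrite -(rot_uniq i) Dp.
have := p3; rewrite -(size_rot i) Dp.
case: q {Dp} => [|y [|z r]] //= _; rewrite !inE !negb_or eqxx.
by case/and4P=> /and3P[xy xz _] _ _ _; rewrite (eq_sym y) (negbTE xy) eqxx eq_sym.
Qed.

Section Cycles.

Variable T : finType.
Implicit Types (g : rel T) (p : seq T).

Lemma cycle_edgesE p : uniq p -> cycle_edges p = [set [set x; next p x] | x in p].
Proof.
move=> up; rewrite /cycle_edges -(map_next_rot1 up).
have -> : zip p (map (next p) p) = [seq (x, next p x) | x <- p].
  by rewrite -zip_map map_id.
apply/setP => k; apply/imsetP/imsetP => [[_ /mapP[x xp ->] ->]|[x xp ->]].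
  by exists x.
by exists (x, next p x); rewrite ?map_f.
Qed.

Lemma card_cycle_edges p : uniq p -> 3 <= size p -> #|cycle_edges p| = size p.
Proof.
move=> up p3; rewrite cycle_edgesE // card_in_imset ?(card_uniqP up) //.
move=> x y xp yp /setP E; apply/eqP/negPn/negP => nxy.
have := E x; rewrite !inE eqxx eq_sym (negbTE nxy) /= => /esym/eqP xny.
have := E y; rewrite !inE eqxx (eq_sym y) (negbTE nxy) /= => /eqP ynx.
by have := next_next_neq up p3 xp; rewrite -ynx -xny eqxx.
Qed.

Lemma is_cycle_remove_edge g k C :
  is_cycle (remove_edge g k) C -> is_cycle g C /\ k \notin C.
Proof.
move=> [p [p3 up cp ->]]; split.
  by exists p; split => //; apply: sub_cycle cp => x y /andP[].
rewrite cycle_edgesE //; apply/imsetP => -[x xp kx].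
by have /andP[_] := next_cycle cp xp; rewrite kx eqxx.
Qed.

Lemma is_cycle_through_edge g x y :
  x != y -> g x y -> connect (remove_edge g [set x; y]) y x ->
  exists2 C, is_cycle g C &
    [set x; y] \in C /\
    forall k, k \in C -> k \subset [set z | connect (remove_edge g [set x; y]) y z].
Proof.
move=> nxy gxy /connectP[_ /shortenP[q pq uq _] lq].
case/lastP: q pq uq lq => [_ _ /eqP|q0 z pq uq]; first by rewrite (negbTE nxy).
rewrite last_rcons => xz; subst z; set G' := remove_edge g [set x; y] in pq *.
have up : uniq (x :: y :: q0) by move: uq; rewrite -rcons_cons rcons_uniq.
have in_G' : {subset x :: y :: q0 <= [set z | connect G' y z]}.
  move=> z z_p; rewrite inE; apply: (path_connect pq).
  by move: z_p; rewrite !inE mem_rcons inE orbCA.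
exists (cycle_edges (x :: y :: q0)); last split.
- exists (x :: y :: q0); split => //.
    move: pq; case: q0 {up uq in_G'} => //=.
    by rewrite /G' /remove_edge setUC eqxx !andbF.
  by rewrite /cycle /= gxy; apply: (sub_path _ pq) => a b /andP[].
- rewrite cycle_edgesE //; apply/imsetP; exists x; rewrite ?mem_head //.
  by rewrite /next /= eqxx.
- rewrite cycle_edgesE // => _ /imsetP[z z_p ->].
  by apply/subsetP => t; rewrite !inE => /orP[]/eqP->; rewrite -inE in_G' ?mem_next.
Qed.

End Cycles.

Section EvenCycle.

Variables (T : finType) (g : rel T) (d : T -> nat).

Hypothesis d_descent :
  forall x, 0 < d x -> exists2 y, g x y & d y = (d x).-1.
Hypothesis g_sym : symmetric g.
Hypothesis d_eq0_adj : forall x y, d x = 0 -> d y = 0 -> x != y -> g x y.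

Local Notation f := (descent_step g d).

Lemma even_cycle_of_level_edge a b :
  g a b -> d a = d b -> 0 < d a -> iter (d a) f a != iter (d a) f b ->
  exists C, is_cycle g C /\ ~~ odd #|C|.
Proof.
move=> gab dab da_gt0 ends_neq; set m := d a in da_gt0 ends_neq.
have g_desc y : 0 < d y -> g y (f y) by move/(descent_stepP d_descent)=> [].
have d_iter_a i : i <= m -> d (iter i f a) = m - i by apply: d_iter_descent.
have d_iter_b i : i <= m -> d (iter i f b) = m - i.
  by rewrite /m dab; apply: d_iter_descent.
(* the cycle a, f a, ..., f^m a, f^m b, ..., f b, of length 2 * m.+1 *)
set A := traject f a m.+1; set B := traject f b m.+1.
have uA : uniq A by apply: uniq_descent.
have uB : uniq B by rewrite /B /m dab; apply: uniq_descent.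
have AB_disjoint : ~~ has (mem A) B.
  apply/hasPn => _ /trajectP[j lt_j ->]; apply/negP => /trajectP[i lt_i E].
  have eq_ij : i = j.
    have := congr1 d E.
    by rewrite (d_iter_a _ (ltnSE lt_i)) (d_iter_b _ (ltnSE lt_j)); lia.
  by subst j; move: ends_neq; rewrite -(subnK (ltnSE lt_i)) !iterD E eqxx.
have up : uniq (A ++ rev B).
  by rewrite cat_uniq uA has_rev AB_disjoint rev_uniq uB.
have size_p : size (A ++ rev B) = m.+1 + m.+1.
  by rewrite size_cat size_rev !size_traject.
exists (cycle_edges (A ++ rev B)); split.
  exists (A ++ rev B); split => //; first by rewrite size_p; lia.
  have ends_adj : g (iter m f b) (iter m f a).
    by apply: d_eq0_adj; rewrite ?d_iter_a ?d_iter_b ?subnn // eq_sym.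
  have back : path g (iter m f a) (rev (b :: traject f (f b) m)).
    rewrite -(last_rcons b (traject f (f b) m) (iter m f a)).
    rewrite -(belast_rcons _ _ (iter m f a)) rev_path.
    rewrite (@eq_path _ _ g) => [|x y]; last exact: g_sym.
    by rewrite rcons_path last_traject ends_adj andbT /m dab descent_path.
  rewrite /A /B !trajectS rev_cons /cycle cat_cons rcons_cat cat_path rcons_path.
  by rewrite last_rcons last_traject -rev_cons back g_sym gab descent_path.
by rewrite card_cycle_edges ?size_p ?addnn ?odd_double //; lia.
Qed.

End EvenCycle.

Lemma remove_edge_sym (T : finType) (g : rel T) k :
  symmetric g -> symmetric (remove_edge g k).
Proof. by move=> g_sym x y; rewrite /remove_edge g_sym setUC. Qed.

Lemma remove_edge_level (T : finType) (g : rel T) (d : T -> nat) x y a b :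
  g x y -> d x != d y -> d a = d b -> remove_edge g [set a; b] x y.
Proof.
move=> gxy dxy dab; rewrite /remove_edge gxy; apply: contraNneq dxy => E.
have : (x \in [set a; b]) && (y \in [set a; b]) by rewrite -E !inE !eqxx ?orbT.
by rewrite !inE => /andP[/orP[]/eqP-> /orP[]/eqP->]; rewrite ?dab.
Qed.

Lemma edgesP (T : finType) (g : rel T) e :
  e \in edges g -> exists a b, g a b /\ e = [set a; b].
Proof. by rewrite inE => /existsP[a /existsP[b /andP[gab /eqP ->]]]; exists a, b. Qed.

Lemma edges_set2 (T : finType) (g : rel T) a b : g a b -> [set a; b] \in edges g.
Proof.
by move=> gab; rewrite inE; apply/existsP; exists a; apply/existsP; exists b;
  rewrite gab eqxx.
Qed.

Local Open Scope ring_scope.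

Lemma addr_signr_adj (R : nzRingType) (m n : nat) :
  (m <= n.+1)%N -> (n <= m.+1)%N -> m != n -> (-1) ^+ m + (-1) ^+ n = 0 :> R.
Proof.
move=> le_mn le_nm ne_mn; have [->|->] : m = n.+1 \/ n = m.+1 by lia.
  by rewrite exprS mulN1r addNr.
by rewrite exprS mulN1r addrN.
Qed.

Lemma incidence_weighted_sum (R : comNzRingType) (T : finType) (g : rel T)
    (mu : {set T} -> R) (lam : T -> R) (A : {set T}) (s : T -> R) k :
  incidence_eq g mu lam -> k \in edges g ->
  (forall e, e \in edges g -> e != k -> \sum_(i in e :&: A) s i = 0) ->
  \sum_(i in A) s i * lam i = mu k * \sum_(i in k :&: A) s i.
Proof.
move=> inc kE sum_e0.
have -> : \sum_(i in A) s i * lam i =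
          \sum_(e in edges g) mu e * \sum_(i in e :&: A) s i.
  under eq_bigr => i _ do rewrite -(inc i) mulr_sumr.
  rewrite (exchange_big_dep (mem (edges g))) /=; last by move=> i e _ /andP[].
  apply: eq_bigr => e eE; rewrite mulr_sumr; apply: eq_big => [i|i _].
    by rewrite eE inE andbC.
  by rewrite mulrC.
rewrite (bigD1 k) //= [X in _ + X]big1 ?addr0 // => e /andP[eE ne].
by rewrite sum_e0 ?mulr0.
Qed.

Section SignedSums.

Variables (T : finType) (g : rel T) (u v : T).

Hypotheses (g_sym : symmetric g) (g_irr : irreflexive g).
Hypothesis g_connected : connected_graph g.
Hypothesis g_odd : forall C, is_cycle g C -> odd #|C|.
Hypothesis guv : g u v.

Local Notation d x := (dedge g x u v).
Local Notation G' := (remove_edge g [set u; v]).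
Local Notation f := (descent_step g (fun x => dedge g x u v)).

Let d_descent := @dedge_descent _ _ g_connected u v.

Let d_endpoint x : x \in [set u; v] -> d x = 0%N.
Proof. by rewrite -(dedge_eq0 g_connected) => /eqP. Qed.

Let neq_uv : u != v.
Proof. by apply: contraTneq guv => ->; rewrite g_irr. Qed.

Lemma level_edge_cycle a b :
  g a b -> [set a; b] != [set u; v] -> d a = d b ->
  exists2 C, is_cycle G' C &
    forall e, e \in C -> e \subset [set z | connect G' b z].
Proof.
move=> gab ab_ne_k dab.
have d_eq0_adj x y : d x = 0%N -> d y = 0%N -> x != y -> g x y.
  move=> /eqP + /eqP; rewrite !(dedge_eq0 g_connected) !inE.
  by case/orP=> /eqP-> /orP[]/eqP->; rewrite ?eqxx // g_sym.
have da_gt0 : (0 < d a)%N.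
  rewrite lt0n; apply: contraNneq ab_ne_k => /eqP da0.
  have db0 : d b == 0%N by rewrite -dab.
  move: da0 db0; rewrite !(dedge_eq0 g_connected) !inE => /orP[]/eqP ea /orP[]/eqP eb;
    by move: gab; rewrite ea eb ?g_irr // setUC.
have [ends_eq|ends_neq] := eqVneq (iter (d a) f a) (iter (d a) f b); last first.
  have [C [/g_odd C_odd C_even]] :=
    even_cycle_of_level_edge d_descent g_sym d_eq0_adj gab dab da_gt0 ends_neq.
  by rewrite C_odd in C_even.
(* descent steps strictly decrease d, so they avoid the level edges k and {a, b} *)
have desc_G'' y : (0 < d y)%N -> remove_edge G' [set a; b] y (f y).
  move=> dy; have [gy dfy] := descent_stepP d_descent dy.
  have dy_neq : d y != d (f y).
    by rewrite dfy; case: (d y) dy => // n _; apply/eqP; lia.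
  apply: (@remove_edge_level _ _ (fun x => d x)) => //.
  apply: (@remove_edge_level _ _ (fun x => d x)) => //.
  by rewrite !d_endpoint // !inE eqxx ?orbT.
have G''_sym : connect_sym (remove_edge G' [set a; b]).
  by apply/sym_connect_sym/remove_edge_sym/remove_edge_sym.
have ba : connect (remove_edge G' [set a; b]) b a.
  have := connect_descent_end d_descent b desc_G''; rewrite -dab -ends_eq => b_end.
  by apply: connect_trans b_end _; rewrite G''_sym; apply: connect_descent_end.
have nab : a != b by apply: contraTneq gab => ->; rewrite g_irr.
have G'ab : G' a b by rewrite /remove_edge gab ab_ne_k.
have [C C_cycle [_ C_sub]] := is_cycle_through_edge nab G'ab ba.
exists C => // e /C_sub /subset_trans; apply; apply/subsetP => z; rewrite !inE.
by apply: connect_sub => x y /andP[G'xy _]; apply: connect1.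
Qed.

Variable R : comNzRingType.

Lemma sum_sign_edge a b :
  g a b -> d a != d b -> \sum_(i in [set a; b]) (-1) ^+ d i = 0 :> R.
Proof.
move=> gab dab; have nab : a != b by apply: contraNneq dab => ->.
rewrite big_setU1 ?big_set1 ?inE //= addr_signr_adj //.
  exact: dedge_edge.
by apply: dedge_edge; rewrite // g_sym.
Qed.

Lemma sum_sign_endpoints (A : {set T}) :
  \sum_(i in [set u; v] :&: A) (-1) ^+ d i = #|[set u; v] :&: A|%:R :> R.
Proof.
rewrite -sumr_const; apply: eq_bigr => i; rewrite inE => /andP[i_k _].
by rewrite d_endpoint.
Qed.

Lemma signed_sum_cycle_edge (mu : {set T} -> R) (lam : T -> R) :
  incidence_eq g mu lam -> (forall C, is_cycle g C -> [set u; v] \in C) ->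
  \sum_i (-1) ^+ d i * lam i = mu [set u; v] *+ 2.
Proof.
move=> inc k_in_cycles.
have -> : \sum_i (-1) ^+ d i * lam i = \sum_(i in [set: T]) (-1) ^+ d i * lam i.
  by apply: eq_bigl => i; rewrite inE.
rewrite (incidence_weighted_sum inc (edges_set2 guv));
  last move=> _ /edgesP[a [b [gab ->]]] ne.
  by rewrite sum_sign_endpoints setIT cards2 neq_uv mulr_natr.
rewrite setIT sum_sign_edge //.
apply/eqP => dab; have [C C_cycle _] := level_edge_cycle gab ne dab.
have [/k_in_cycles k_in_C k_notin_C] := is_cycle_remove_edge C_cycle.
by rewrite k_in_C in k_notin_C.
Qed.

Lemma signed_sum_bridge (mu : {set T} -> R) (lam : T -> R) w (Vk : {set T}) :
  incidence_eq g mu lam -> (forall C, is_cycle g C -> [set u; v] \notin C) ->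
  w \in [set u; v] -> Vk = [set x | connect G' w x] ->
  (forall C, is_cycle G' C -> ~ (forall e, e \in C -> e \subset Vk)) ->
  \sum_(i in Vk) (-1) ^+ d i * lam i = mu [set u; v].
Proof.
move=> inc k_notin_cycles wk VkE Vk_acyclic.
have G'_sym : connect_sym G' by apply/sym_connect_sym/remove_edge_sym.
have Vk_closed x y : G' x y -> (x \in Vk) = (y \in Vk).
  by move=> G'xy; rewrite VkE !inE (same_connect_r G'_sym (connect1 G'xy)).
have k_Vk : [set u; v] :&: Vk = [set w].
  have not_uv : ~~ connect G' v u.
    apply/negP => /(is_cycle_through_edge neq_uv guv)[C /k_notin_cycles k_notin].
    by case=> k_in _; rewrite k_in in k_notin.
  apply/setP => x; rewrite VkE in_setI in_set1 inE.
  have [->|xw] := eqVneq x w; first by rewrite wk connect0.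
  apply/negbTE/andP => -[xk]; move: wk xk xw; rewrite !inE.
  case/orP=> /eqP-> /orP[]/eqP->; rewrite ?eqxx // => _ c;
    by move/negP: not_uv; apply; rewrite // G'_sym.
rewrite (incidence_weighted_sum inc (edges_set2 guv));
  last move=> _ /edgesP[a [b [gab ->]]] ne.
  by rewrite sum_sign_endpoints k_Vk cards1 mulr1.
have G'ab : G' a b by rewrite /remove_edge gab ne.
have [aV|aV] := boolP (a \in Vk); last first.
  have bV : b \notin Vk by rewrite -(Vk_closed _ _ G'ab).
  suff -> : [set a; b] :&: Vk = set0 by rewrite big_set0.
  apply/setP => x; rewrite !inE; apply/negbTE/andP => -[/orP[]/eqP-> xV].
    by rewrite xV in aV.
  by rewrite xV in bV.
have bV : b \in Vk by rewrite -(Vk_closed _ _ G'ab).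
have -> : [set a; b] :&: Vk = [set a; b].
  by apply/setIidPl/subsetP => x; rewrite !inE => /orP[]/eqP->.
rewrite sum_sign_edge //; apply/eqP => dab.
have [C C_cycle C_sub] := level_edge_cycle gab ne dab.
apply: (Vk_acyclic C C_cycle) => e /C_sub /subset_trans; apply; apply/subsetP => z.
by move: bV; rewrite VkE !inE; apply: connect_trans.
Qed.

End SignedSums.

Theorem proposition4p1 (R : realFieldType) (T : finType) (g : rel T)
  (lam : T -> R) (mu : {set T} -> R) :
  simple_graph g -> bijective_graph g ->
  (forall i, 0 < lam i) ->
  incidence_eq g mu lam ->
  forall u v : T, g u v ->
  forall C : {set {set T}}, is_cycle g C ->
  (* (i) k = {u,v} not on the cycle; Vk = tree part of G - k *)
  ([set u; v] \notin C ->
     forall (w : T) (Vk : {set T}),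
       w \in [set u; v] ->
       Vk = [set x | connect (remove_edge g [set u; v]) w x] ->
       (forall C', is_cycle (remove_edge g [set u; v]) C' ->
          ~ (forall k', k' \in C' -> k' \subset Vk)) ->
       mu [set u; v] = \sum_(i in Vk) (-1) ^+ dedge g i u v * lam i)
  /\
  (* (ii) k = {u,v} on the cycle *)
  ([set u; v] \in C ->
     mu [set u; v] = 2^-1 * \sum_(i : T) (-1) ^+ dedge g i u v * lam i).
Proof.
move=> [g_sym g_irr] [g_conn [C0 [_ C0_uniq]] g_odd] _ inc u v guv C C_cycle.
have cycle_eqC C' : is_cycle g C' -> C' = C.
  by move=> /C0_uniq->; rewrite (C0_uniq C).
split=> [k_notin_C w Vk wk VkE Vk_acyclic | k_in_C].
  rewrite (signed_sum_bridge g_sym g_irr g_conn g_odd guv inc _ wk VkE Vk_acyclic) //.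
  by move=> C' /cycle_eqC->.
rewrite (signed_sum_cycle_edge g_sym g_irr g_conn g_odd guv inc);
  last by move=> C' /cycle_eqC->.
by rewrite -[mu _ *+ 2]mulr_natl mulKf ?pnatr_eq0.
Qed.
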